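(* Let $\mathcal P$ be an $\mathsf{NPO}\text{-}\mathsf{PB}$ problem. Then there is a polynomial $q$ such that for every instance of $\mathcal P$ of input size $s$, the DLA of QWOA for that instance satisfies $\dim(\mathfrak g_{\mathrm{QWOA},\mathcal P})\le q(s)$; i.e. $\dim(\mathfrak g_{\mathrm{QWOA},\mathcal P})=\mathcal O(\mathrm{poly}(s))$.
   Context: An instance of a combinatorial optimization problem consists of a finite nonempty set $\mathcal S'$ of feasible solutions and a cost function $C:\mathcal S'\to\mathbb R$. Let $N=|\mathcal S'|$. Work in $\mathbb C^N$ with orthonormal basis $\{|z\rangle : z\in\mathcal S'\}$. The problem Hamiltonian is the diagonal matrix $H_C$ with $H_C|z\rangle=C(z)|z\rangle$; the mixing Hamiltonian is the $N\times N$ all-ones matrix $H_M=J$ (equal, up to adding the identity, to the adjacency matrix of the complete graph $K_N$). The DLA of QWOA, $\mathfrak g_{\mathrm{QWOA},\mathcal P}$, for an instance of problem $\mathcal P$ is the real Lie algebra generated by $iH_C$ and $iH_M$, i.e. the smallest real linear subspace of $N\times N$ complex matrices containing $iH_C,iH_M$ and closed under the commutator; its dimension is its real dimension. The class $\mathsf{NPO}$ consists of optimization problems whose solutions have size polynomial in the input size $s$ and whose feasibility and cost can be computed in deterministic polynomial time. $\mathsf{NPO}\text{-}\mathsf{PB}$ consists of $\mathsf{NPO}$ problems whose cost function takes values in a discrete range of size polynomially bounded in $s$ (e.g. integer values in $\{0,1,\dots,r(s)\}$ for a polynomial $r$). *)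

From HB Require Import structures.
From mathcomp Require Import all_boot all_order all_algebra.
Set Implicit Arguments. Unset Strict Implicit. Unset Printing Implicit Defensive.
Import Order.TTheory GRing.Theory Num.Theory.
Local Open Scope ring_scope.

Section QWOA.
Variable C : numClosedFieldType. (* the complex numbers (any numeric closed field) *)

(* Problem Hamiltonian: diagonal matrix of the cost, basis indexed by the
   feasible solutions z in S (enumerated via enum_val). *)
Definition HC (S : finType) (c : S -> C) : 'M[C]_#|S| :=
  \matrix_(i, j) (if i == j then c (enum_val i) else 0).

Definition HM (n : nat) : 'M[C]_n := const_mx 1.

Definition lie_bracket n (A B : 'M[C]_n) : 'M[C]_n := A *m B - B *m A.

Definition real_lie_subalgebra n (U : 'M[C]_n -> Prop) : Prop :=
  [/\ U 0,
      (forall A B, U A -> U B -> U (A + B)),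
      (forall (a : C) A, a \is Num.real -> U A -> U (a *: A)) &
      (forall A B, U A -> U B -> U (lie_bracket A B))].

Definition gen_real_lie n (X Y : 'M[C]_n) (A : 'M[C]_n) : Prop :=
  forall U, real_lie_subalgebra U -> U X -> U Y -> U A.

Definition DLA_QWOA (S : finType) (c : S -> C) : 'M[C]_#|S| -> Prop :=
  gen_real_lie ('i *: HC c) ('i *: HM #|S|).

Definition real_lin_indep n (fam : seq 'M[C]_n) : Prop :=
  forall a : 'I_(size fam) -> C,
    (forall i, a i \is Num.real) ->
    \sum_(i < size fam) a i *: fam`_i = 0 -> forall i, a i = 0.

Definition real_dim_le n (L : 'M[C]_n -> Prop) (d : int) : Prop :=
  forall fam : seq 'M[C]_n, (forall A, A \in fam -> L A) ->
    real_lin_indep fam -> (size fam)%:Z <= d.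

Definition num_cost_values (S : finType) (c : S -> C) : nat :=
  size (undup [seq c z | z <- enum S]).

End QWOA.

From HB Require Import structures.
From mathcomp Require Import all_boot all_order all_algebra all_fingroup.
Set Implicit Arguments. Unset Strict Implicit. Unset Printing Implicit Defensive.
Import Order.TTheory GRing.Theory Num.Theory.
Local Open Scope ring_scope.

(* Both generators of the DLA are invariant under simultaneous permutation of
   rows and columns by any permutation of the feasible solutions preserving the
   cost, and such invariant matrices form a real Lie algebra, so the whole DLA
   is invariant.  An invariant matrix is constant on each set of index pairs
   (i, j) with prescribed costs C(i), C(j) and prescribed truth value of i = j:
   it lies in the complex span of 2k^2 indicator matrices, k the number of
   distinct cost values, hence the DLA has real dimension at most 4k^2, which
   is polynomial in the input size for an NPO-PB problem. *)

Section RealDimension.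
Variables (C : numClosedFieldType) (n : nat).
Implicit Types (L : 'M[C]_n -> Prop) (T : finType).

Lemma real_dim_le_real_span T L (B : T -> 'M[C]_n) (coord : 'M[C]_n -> T -> C) :
    (forall A t, coord A t \is Num.real) ->
    (forall A, L A -> A = \sum_t coord A t *: B t) ->
  real_dim_le L #|T|.
Proof.
move=> coord_real span fam famL indep; rewrite lez_nat leqNgt; apply/negP => ltTp.
set p := size fam in ltTp indep *.
pose M : 'M[C]_(p, #|T|) := \matrix_(i, j) coord fam`_i (enum_val j).
have comb_eq0 (a : 'I_p -> C) :
    (\row_i a i) *m M = 0 -> \sum_i a i *: fam`_i = 0.
  move=> aM0; transitivity (\sum_t ((\row_i a i) *m M) 0 (enum_rank t) *: B t).
    under eq_bigr => i _ do
      rewrite {1}(span _ (famL _ (mem_nth 0 (ltn_ord i)))) scaler_sumr.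
    rewrite exchange_big; apply: eq_bigr => t _; rewrite mxE scaler_suml.
    by apply: eq_bigr => i _; rewrite !mxE enum_rankK scalerA.
  by rewrite big1 // => t _; rewrite aM0 mxE scale0r.
have /rowV0Pn [v /sub_kermxP vM0 /eqP v_neq0] : kermx M != 0.
  rewrite kermx_eq0; apply: contraTN ltTp => /eqP <-.
  by rewrite -leqNgt rank_leq_col.
(* [M] has real entries, so the real and imaginary parts of [v] are real
   vectors in its left kernel. *)
have part_eq0 (f : {additive C -> C}) :
    {in Num.real, forall r, {morph f : z / z * r}} ->
    (forall z, f z \is Num.real) -> forall i, f (v 0 i) = 0.
  move=> fM f_real; apply: indep => //; apply: comb_eq0; apply/rowP => j.
  have := congr1 (fun X : 'rV[C]_#|T| => f (X 0 j)) vM0.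
  rewrite !mxE raddf0 raddf_sum => eq0.
  by rewrite -[RHS]eq0; apply: eq_bigr => i _; rewrite !mxE fM ?coord_real.
have re0 := part_eq0 (@Re C : {additive C -> C}) (@ReMr C) (@Creal_Re C).
have im0 := part_eq0 (@Im C : {additive C -> C}) (@ImMr C) (@Creal_Im C).
by apply: v_neq0; apply/rowP => i; rewrite mxE [v 0 i]Crect re0 im0 mulr0 addr0.
Qed.

Lemma real_dim_le_span T L (B : T -> 'M[C]_n) (coord : 'M[C]_n -> T -> C) :
  (forall A, L A -> A = \sum_t coord A t *: B t) -> real_dim_le L (2 * #|T|)%N.
Proof.
move=> span; rewrite -[2%N](card_bool) -card_prod.
pose coordRI A (bt : bool * T) :=
  if bt.1 then 'Im (coord A bt.2) else 'Re (coord A bt.2).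
pose BRI (bt : bool * T) := (if bt.1 then 'i else 1) *: B bt.2.
apply: (@real_dim_le_real_span _ _ BRI coordRI).
  by move=> A [[] t]; rewrite /coordRI /= ?Creal_Im ?Creal_Re.
move=> A /span {1}->.
rewrite -(pair_bigA _ (fun b t => coordRI A (b, t) *: BRI (b, t))).
rewrite big_bool -big_split; apply: eq_bigr => t _.
by rewrite /coordRI /BRI /= !scalerA mulr1 -scalerDl mulrC addrC -Crect.
Qed.

Section Pattern.
Variables (T : finType) (pat : 'I_n -> 'I_n -> T).

Definition pattern_mx t : 'M[C]_n := \matrix_(i, j) (pat i j == t)%:R.

Definition pattern_coord (A : 'M[C]_n) t : C :=
  if [pick ij | pat ij.1 ij.2 == t] is Some ij then A ij.1 ij.2 else 0.

Definition pattern_constant (A : 'M[C]_n) :=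
  forall i j i' j', pat i j = pat i' j' -> A i j = A i' j'.

Lemma pattern_decomposition A :
  pattern_constant A -> A = \sum_t pattern_coord A t *: pattern_mx t.
Proof.
move=> A_const; apply/matrixP => i j; rewrite summxE (bigD1 (pat i j)) //=.
rewrite big1 => [|t /negbTE ne_t]; last by rewrite !mxE eq_sym ne_t mulr0.
rewrite !mxE eqxx mulr1 addr0 /pattern_coord.
case: pickP => [[i' j'] /eqP /= pat_eq | /(_ (i, j))]; last by rewrite eqxx.
exact: A_const.
Qed.

Lemma real_dim_le_pattern L :
  (forall A, L A -> pattern_constant A) -> real_dim_le L (2 * #|T|)%N.
Proof.
move=> L_const; apply: (real_dim_le_span (coord := pattern_coord)) => A /L_const.
exact: pattern_decomposition.
Qed.

End Pattern.

End RealDimension.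

Section CostSymmetry.
Variables (C : numClosedFieldType) (S : finType) (c : S -> C).

Definition cost_at (i : 'I_#|S|) : C := c (enum_val i).

Definition cost_preserving (s : {perm 'I_#|S|}) :=
  forall i, cost_at (s i) = cost_at i.

Definition cost_symmetric (A : 'M[C]_#|S|) :=
  forall s, cost_preserving s -> forall i j, A (s i) (s j) = A i j.

Lemma cost_symmetric_mul A B :
  cost_symmetric A -> cost_symmetric B -> cost_symmetric (A *m B).
Proof.
move=> symA symB s s_pres i j; rewrite !mxE (reindex_inj (@perm_inj _ s)) /=.
by apply: eq_bigr => l _; rewrite symA // symB.
Qed.

Lemma cost_symmetric_lie : real_lie_subalgebra cost_symmetric.
Proof.
split=> [s _ i j | A B symA symB s s_pres i j | a A _ symA s s_pres i j |].
- by rewrite !mxE.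
- by rewrite !mxE symA // symB.
- by rewrite !mxE symA.
move=> A B symA symB s s_pres i j; rewrite /lie_bracket.
move: (cost_symmetric_mul symA symB s_pres i j).
move: (cost_symmetric_mul symB symA s_pres i j).
by rewrite !mxE => -> ->.
Qed.

Lemma DLA_cost_symmetric A : DLA_QWOA c A -> cost_symmetric A.
Proof.
move=> /(_ cost_symmetric cost_symmetric_lie); apply.
- move=> s s_pres i j; rewrite !mxE (inj_eq (@perm_inj _ s)).
  by case: eqP => // ->; rewrite -[c _]/(cost_at _) s_pres.
- by move=> s _ i j; rewrite !mxE.
Qed.

Lemma tperm_cost_preserving x y :
  cost_at x = cost_at y -> cost_preserving (tperm x y).
Proof. by move=> cxy i; case: tpermP => // ->. Qed.

Definition cost_values := undup [seq c z | z <- enum S].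

Lemma cost_at_mem i : cost_at i \in cost_values.
Proof. by rewrite mem_undup; apply: map_f; rewrite mem_enum. Qed.

Definition cost_class i : seq_sub cost_values := SeqSub (cost_at_mem i).

Definition cost_pattern i j := (i == j, cost_class i, cost_class j).

Lemma cost_symmetric_pattern_constant A :
  cost_symmetric A -> pattern_constant cost_pattern A.
Proof.
move=> symA i j i' j' [+ ci cj]; case: (eqVneq i j) => [<- /esym/eqP <- | ne_ij].
  by rewrite -(symA _ (tperm_cost_preserving ci)) tpermL.
move=> /esym/negbT ne_ij'; set j1 := tperm i i' j.
have ne_i'j1 : i' != j1 by rewrite -(tpermL i i') (inj_eq (@perm_inj _ _)).
have cj1 : cost_at j1 = cost_at j' by rewrite tperm_cost_preserving.
rewrite -(symA _ (tperm_cost_preserving ci)) tpermL -/j1.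
by rewrite -(symA _ (tperm_cost_preserving cj1)) tpermL tpermD // eq_sym.
Qed.

Lemma real_dim_le_DLA_QWOA :
  real_dim_le (DLA_QWOA c) (4 * num_cost_values c ^ 2)%N.
Proof.
have -> : (4 * num_cost_values c ^ 2 =
           2 * #|{: bool * seq_sub cost_values * seq_sub cost_values}|)%N.
  rewrite !card_prod card_bool card_seq_sub ?undup_uniq //.
  by rewrite !mulnA -[(_ * 2 * _ * _)%N]mulnA mulnn.
apply: real_dim_le_pattern => A /DLA_cost_symmetric.
exact: cost_symmetric_pattern_constant.
Qed.

End CostSymmetry.

Theorem corollary1 (C : numClosedFieldType)
    (Inst : Type) (insize : Inst -> nat) (Sol : Inst -> finType)
    (cost : forall x : Inst, Sol x -> C)
    (Hne : forall x : Inst, (0 < #|Sol x|)%N)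
    (Hreal : forall (x : Inst) (z : Sol x), cost x z \is Num.real)
    (Hpb : exists r : {poly int}, forall x : Inst,
        (num_cost_values (cost x))%:Z <= r.[(insize x)%:Z]) :
  exists q : {poly int}, forall x : Inst,
    real_dim_le (DLA_QWOA (cost x)) q.[(insize x)%:Z].
Proof.
have [r r_bound] := Hpb; exists (4%:P * r ^+ 2) => x fam famL indep.
apply: le_trans (real_dim_le_DLA_QWOA famL indep) _.
have k_le_r := r_bound x.
rewrite hornerM hornerC horner_exp PoszM -!natz natrX !natz ler_pM2l //.
by rewrite lerXn2r ?nnegrE // (le_trans _ k_le_r).
Qed.
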